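(* Let $k\geq 1$ be an odd integer and let $G$ be a finite simple graph that has an almost perfect integer $k$-matching. Then for every $S\subseteq V(G)$, $$\mathrm{odd}(G-S)+k\cdot i(G-S)\leq k|S|+1 .$$
   Context: All graphs are finite, simple and undirected. For $v\in V(G)$, $\Gamma(v)$ denotes the set of edges incident with $v$. For a positive integer $k$, an integer $k$-matching of $G$ is a function $h:E(G)\to\{0,1,\dots,k\}$ such that $\sum_{e\in\Gamma(v)}h(e)\leq k$ for every $v\in V(G)$. It is almost perfect if there is exactly one vertex $v'$ with $\sum_{e\in\Gamma(v')}h(e)=k-1$ and $\sum_{e\in\Gamma(v)}h(e)=k$ for every other vertex $v$. For a graph $H$, $i(H)$ is the number of isolated vertices (vertices of degree $0$) of $H$, and $\mathrm{odd}(H)$ is the number of connected components of $H$ that have an odd number of vertices and at least three vertices. *)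

From mathcomp Require Import all_boot.
Set Implicit Arguments. Unset Strict Implicit. Unset Printing Implicit Defensive.

Definition simple_graph (T : finType) (e : rel T) : Prop :=
  symmetric e /\ irreflexive e.

Definition edges (T : finType) (e : rel T) : {set {set T}} :=
  [set [set x; y] | x in T, y in T & e x y].

Definition hdeg (T : finType) (e : rel T) (h : {set T} -> nat) (v : T) : nat :=
  \sum_(f in edges e | v \in f) h f.

(* integer k-matching: h : E(G) -> {0..k}, sum at each vertex <= k
   (h is a function on all 2-sets, only its values on edges matter). *)
Definition int_matching (T : finType) (e : rel T) (k : nat) (h : {set T} -> nat) : Prop :=
  (forall f, f \in edges e -> h f <= k) /\ (forall v, hdeg e h v <= k).

Definition almost_perfect_int_matching (T : finType) (e : rel T) (k : nat)
    (h : {set T} -> nat) : Prop :=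
  int_matching e k h /\
  exists v', hdeg e h v' = k.-1 /\ (forall v, v != v' -> hdeg e h v = k).

Definition del_rel (T : finType) (e : rel T) (S : {set T}) : rel T :=
  [rel x y | [&& e x y, x \notin S & y \notin S]].

Definition compo (T : finType) (e : rel T) (S : {set T}) (x : T) : {set T} :=
  [set y in ~: S | connect (del_rel e S) x y].

Definition components (T : finType) (e : rel T) (S : {set T}) : {set {set T}} :=
  [set compo e S x | x in ~: S].

Definition iso_count (T : finType) (e : rel T) (S : {set T}) : nat :=
  #|[set x in ~: S | [forall y, ~~ del_rel e S x y]]|.

Definition odd_count (T : finType) (e : rel T) (S : {set T}) : nat :=
  #|[set C in components e S | odd #|C| && (3 <= #|C|)]|.

From mathcomp Require Import all_boot zify.
Set Implicit Arguments. Unset Strict Implicit. Unset Printing Implicit Defensive.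

(* Proof of the degree-counting bound  odd(G-S) + k i(G-S) <= k|S| + 1.
   Let h be an almost perfect integer k-matching with deficient vertex v', and
   for y outside S let the boundary weight  bweight y  be the total h-weight of
   the edges from y into S.  Then:
   - double counting: the boundary weights of all y outside S add up to at most
     the weight at the vertices of S, hence to at most k|S|;
   - an isolated vertex y of G-S sends all its weight into S, so its boundary
     weight is at least k - [y = v'];
   - in a component C of G-S the internal edges contribute an even amount to
     the weight sum of C; if |C| is odd and v' is not in C, that sum is k|C|,
     which is odd, so C has positive boundary weight;
   - isolated vertices and odd components are disjoint pieces of V - S, so
     their boundary weights add up to at most the total, and v' lies in at
     most one of them. *)

Definition isolated (T : finType) (e : rel T) (S : {set T}) : {set T} :=
  [set x in ~: S | [forall y, ~~ del_rel e S x y]].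

Definition odd_components (T : finType) (e : rel T) (S : {set T}) : {set {set T}} :=
  [set C in components e S | odd #|C| && (3 <= #|C|)].

Lemma sum_sub_le (T : finType) (P Q : pred T) (F : T -> nat) :
  \sum_(i | P i && Q i) F i <= \sum_(i | P i) F i.
Proof. by rewrite (bigID Q P) /= leq_addr. Qed.

Lemma trivIset_mem_count (T : finType) (P : {set {set T}}) (A : {set T}) v :
  trivIset P -> [disjoint A & cover P] ->
  (v \in A) + \sum_(C in P) (v \in C) <= 1.
Proof.
move=> trP disA.
case: (pickP (fun C => (C \in P) && (v \in C))) => [C0 /andP[C0P vC0] | none].
  have vPC : v \in cover P by apply/bigcupP; exists C0.
  have -> : v \in A = false by exact: disjointFl disA vPC.
  rewrite (bigD1 C0) //= vC0 big1 // => C /andP[CP neC0]; case vC: (v \in C) => //.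
  by move: neC0; rewrite -(def_pblock trP CP vC) -(def_pblock trP C0P vC0) eqxx.
rewrite big1 ?addn0; first by case: (v \in A).
by move=> C CP; move: (none C); rewrite /= CP /= => ->.
Qed.

Lemma sum_disjoint_pieces_le (T : finType) (F : T -> nat)
    (A B : {set T}) (P : {set {set T}}) :
  trivIset P -> A \subset B -> cover P \subset B :\: A ->
  \sum_(y in A) F y + \sum_(C in P) \sum_(y in C) F y <= \sum_(y in B) F y.
Proof.
move=> trP AB PBA; rewrite -big_trivIset // [X in _ <= X](big_setID A) /=.
rewrite (setIidPr AB) leq_add2l [X in _ <= X](big_setID (cover P)) /=.
by rewrite (setIidPr PBA) leq_addr.
Qed.

Section Components.

Variables (T : finType) (e : rel T) (S : {set T}).
Hypothesis sym_e : symmetric e.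

Lemma del_rel_sym : symmetric (del_rel e S).
Proof. by move=> x y; rewrite /del_rel /= sym_e; case: (x \in S); case: (y \in S). Qed.

Lemma compo_self x : x \notin S -> x \in compo e S x.
Proof. by move=> xS; rewrite !inE xS connect0. Qed.

Lemma compo_closed x y z :
  y \in compo e S x -> z \notin S -> e y z -> z \in compo e S x.
Proof.
rewrite !inE => /andP[yS cxy] zS eyz; rewrite zS /=.
by apply: connect_trans cxy (connect1 _); rewrite /del_rel /= eyz yS zS.
Qed.

Lemma compo_eq x y : y \in compo e S x -> compo e S y = compo e S x.
Proof.
rewrite inE => /andP[_ cxy]; apply/setP => z; rewrite !inE.
congr (_ && _); apply/idP/idP => [cyz | cxz]; first exact: connect_trans cxy cyz.
by apply: connect_trans cxz; rewrite (sym_connect_sym del_rel_sym).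
Qed.

Lemma components_compo C z : C \in components e S -> z \in C -> C = compo e S z.
Proof. by move=> /imsetP[x _ ->] zC; rewrite (compo_eq zC). Qed.

Lemma components_trivIset : trivIset (components e S).
Proof.
apply/trivIsetP => A B HA HB neAB; apply/pred0P => z /=.
apply/negbTE/negP => /andP[zA zB].
by move: neAB; rewrite (components_compo HA zA) (components_compo HB zB) eqxx.
Qed.

Lemma cover_components : cover (components e S) = ~: S.
Proof.
apply/setP => z; apply/bigcupP/idP => [[C /imsetP[x _ ->]] | zS].
  by rewrite !inE => /andP[].
exists (compo e S z); first exact: imset_f.
by apply: compo_self; rewrite inE in zS.
Qed.

Lemma components_notin C z : C \in components e S -> z \in C -> z \notin S.
Proof.
move=> CS zC; suff : z \in ~: S by rewrite inE.
by rewrite -cover_components; apply/bigcupP; exists C.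
Qed.

Lemma isolated_sub : isolated e S \subset ~: S.
Proof. by apply/subsetP => x; rewrite inE => /andP[]. Qed.

Lemma compo_isolated x : x \in isolated e S -> compo e S x = [set x].
Proof.
rewrite inE => /andP[xS /forallP iso]; rewrite inE in xS.
apply/setP => z; rewrite !inE; apply/idP/idP => [|/eqP->]; last by rewrite xS connect0.
case/andP=> _ /connectP[[|y p] /=]; first by move=> _ ->.
by case/andP=> exy; move: (iso y); rewrite exy.
Qed.

Lemma odd_components_cover :
  cover (odd_components e S) \subset ~: S :\: isolated e S.
Proof.
apply/subsetP => y /bigcupP[C]; rewrite inE => /andP[CS /andP[_ C3]] yC.
rewrite inE -(cover_components); apply/andP; split; last by apply/bigcupP; exists C.
apply/negP => yI; move: C3.
by rewrite (components_compo CS yC) (compo_isolated yI) cards1.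
Qed.

Lemma odd_components_trivIset : trivIset (odd_components e S).
Proof.
apply: trivIsetS components_trivIset; apply/subsetP => C.
by rewrite inE => /andP[].
Qed.

Lemma isolated_odd_components_count v :
  (v \in isolated e S) + \sum_(C in odd_components e S) (v \in C) <= 1.
Proof.
apply: trivIset_mem_count odd_components_trivIset _.
rewrite disjoint_sym disjoints_subset.
by apply/subsetP => x /(subsetP odd_components_cover); rewrite !inE => /andP[].
Qed.

End Components.

Section Weights.

Variables (T : finType) (e : rel T) (h : {set T} -> nat).
Hypotheses (sym_e : symmetric e) (irr_e : irreflexive e).

Lemma hdegE v : hdeg e h v = \sum_(y | e v y) h [set v; y].
Proof.
rewrite /hdeg.
transitivity (\sum_(f in [set f in edges e | v \in f]) h f).
  by apply: eq_bigl => f; rewrite inE.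
have -> : [set f in edges e | v \in f] = (fun y => [set v; y]) @: [set y | e v y].
  apply/setP => f; rewrite !inE; apply/andP/imsetP.
  - case=> /imset2P [x y _]; rewrite inE => /andP[_ exy] ->.
    rewrite !inE => /orP[] /eqP E; subst; first by exists y; rewrite ?inE.
    by exists x; [rewrite inE sym_e | rewrite setUC].
  - case=> y; rewrite inE => evy ->; split; last by rewrite !inE eqxx.
    by apply/imset2P; exists v y; rewrite ?inE.
rewrite big_imset /=; first by apply: eq_bigl => y; rewrite inE.
move=> y1 y2; rewrite !inE => e1 _ /setP /(_ y1).
rewrite !inE eqxx orbT /= => /esym /orP[/eqP E | /eqP //].
by rewrite E irr_e in e1.
Qed.

Definition bweight (S : {set T}) (y : T) : nat := \sum_(z in S | e y z) h [set y; z].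

(* Double counting the edges between S and V - S. *)
Lemma sum_bweight_le (S : {set T}) :
  \sum_(y in ~: S) bweight S y <= \sum_(v in S) hdeg e h v.
Proof.
have -> : \sum_(y in ~: S) bweight S y = \sum_(v in S) \sum_(y in ~: S | e v y) h [set v; y].
  rewrite [RHS](exchange_big_dep (mem (~: S))) /=; last by move=> ? ? _ /andP[].
  apply: eq_bigr => y yS; apply: eq_big => [v | v _]; last by rewrite setUC.
  by rewrite yS sym_e.
apply: leq_sum => v _; rewrite hdegE.
by rewrite (eq_bigl (fun y => e v y && (y \in ~: S))) ?sum_sub_le // => y; rewrite andbC.
Qed.

Lemma hdeg_component (S C : {set T}) y : C \in components e S -> y \in C ->
  hdeg e h y = \sum_(z in C | e y z) h [set y; z] + bweight S y.
Proof.
move=> CS yC; rewrite hdegE (bigID (fun z => z \in S)) /= addnC /bweight.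
congr (_ + _); last by apply: eq_bigl => z; rewrite andbC.
apply: eq_bigl => z /=; rewrite andbC; case eyz: (e y z); last by rewrite !andbF.
rewrite !andbT (components_compo sym_e CS yC); apply/idP/idP => [zS | ].
  exact: compo_closed (compo_self e (components_notin CS yC)) zS eyz.
by rewrite !inE => /andP[].
Qed.

Lemma hdeg_isolated (S : {set T}) y : y \in isolated e S -> hdeg e h y = bweight S y.
Proof.
move=> yI; have yC : y \in compo e S y by rewrite (compo_isolated yI) set11.
have CS : compo e S y \in components e S.
  by apply: imset_f; move: yI; rewrite inE => /andP[].
rewrite (hdeg_component CS yC) (compo_isolated yI) big1 // => z /andP[].
by rewrite inE => /eqP ->; rewrite irr_e.
Qed.

(* Each edge inside C is counted twice, from both of its ends. *)
Lemma internal_weight_even (C : {set T}) :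
  ~~ odd (\sum_(y in C) \sum_(z in C | e y z) h [set y; z]).
Proof.
pose lt_rk (y z : T) := enum_rank z < enum_rank y.
have split_at y : y \in C -> \sum_(z in C | e y z) h [set y; z] =
    \sum_(z in C | e y z && lt_rk y z) h [set y; z] +
    \sum_(z in C | e y z && lt_rk z y) h [set y; z].
  move=> _; rewrite (bigID (lt_rk y)) /=; congr (_ + _).
    by apply: eq_bigl => z; rewrite andbA.
  apply: eq_bigl => z; rewrite -andbA; congr (_ && _).
  case eyz: (e y z) => //=; rewrite /lt_rk.
  case: ltngtP => // /ord_inj /enum_rank_inj E.
  by rewrite E irr_e in eyz.
rewrite (eq_bigr _ split_at) big_split /=.
rewrite [X in _ + X](exchange_big_dep (mem C)) /=; last by move=> ? ? _ /andP[].
rewrite [X in _ + X](eq_bigr (fun z => \sum_(y in C | e z y && lt_rk z y) h [set z; y])).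
  by rewrite addnn odd_double.
move=> z zC; apply: eq_big => [y | y _]; last by rewrite setUC.
by rewrite zC sym_e.
Qed.

Lemma odd_component_bweight (S C : {set T}) : C \in components e S ->
  odd (\sum_(y in C) hdeg e h y) -> 0 < \sum_(y in C) bweight S y.
Proof.
move=> CS; rewrite (eq_bigr _ (fun y => hdeg_component CS)) big_split /=.
by rewrite oddD (negbTE (internal_weight_even C)) /=; apply: odd_gt0.
Qed.

End Weights.

Section AlmostPerfect.

Variables (T : finType) (e : rel T) (h : {set T} -> nat) (k : nat) (v' : T).
Hypotheses (sym_e : symmetric e) (irr_e : irreflexive e) (odd_k : odd k).
Hypothesis hdeg_def : forall y, hdeg e h y + (y == v') = k.

Lemma isolated_deficit (S : {set T}) :
  k * #|isolated e S| <= \sum_(y in isolated e S) bweight e h S y + (v' \in isolated e S).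
Proof.
rewrite mulnC -sum_nat_const.
apply: (@leq_trans (\sum_(y in isolated e S) (bweight e h S y + (y == v')))).
  by apply: leq_sum => y yI; rewrite -(hdeg_isolated h sym_e irr_e yI) hdeg_def.
rewrite big_split /= leq_add2l; case vI: (v' \in isolated e S).
  by rewrite (bigD1 v') //= eqxx big1 //= => y /andP[_ /negbTE ->].
by rewrite big1 // => y yI; case: eqP yI => // ->; rewrite vI.
Qed.

Lemma odd_components_deficit (S : {set T}) :
  #|odd_components e S| <=
  \sum_(C in odd_components e S) \sum_(y in C) bweight e h S y +
  \sum_(C in odd_components e S) (v' \in C).
Proof.
rewrite -big_split /= -sum1_card; apply: leq_sum => C.
rewrite inE => /andP[CS /andP[oddC _]].
case vC: (v' \in C); first by rewrite addn1.
rewrite addn0; apply: (odd_component_bweight sym_e irr_e CS).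
have -> : \sum_(y in C) hdeg e h y = #|C| * k.
  rewrite -sum_nat_const; apply: eq_bigr => y yC.
  by rewrite -(hdeg_def y); case: eqP yC => [-> | _]; rewrite ?vC ?addn0.
by rewrite oddM oddC odd_k.
Qed.

End AlmostPerfect.

Theorem lemma3p6 (T : finType) (e : rel T) (k : nat) :
  simple_graph e -> odd k ->
  (exists h : {set T} -> nat, almost_perfect_int_matching e k h) ->
  forall S : {set T},
    odd_count e S + k * iso_count e S <= k * #|S| + 1.
Proof.
move=> [sym_e irr_e] odd_k [h [[_ hle] [v' [hv' hv]]]] S.
have hdeg_def y : hdeg e h y + (y == v') = k.
  case: eqP => [-> | /eqP ne]; last by rewrite hv // addn0.
  by rewrite hv' addn1 prednK // odd_gt0.
have total : \sum_(y in ~: S) bweight e h S y <= k * #|S|.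
  apply: leq_trans (sum_bweight_le h sym_e irr_e S) _.
  by rewrite mulnC -sum_nat_const; apply: leq_sum => v _.
have pieces := sum_disjoint_pieces_le (bweight e h S)
  (odd_components_trivIset S sym_e) (isolated_sub e S) (odd_components_cover S sym_e).
have iso := isolated_deficit sym_e irr_e hdeg_def S.
have odds := odd_components_deficit sym_e irr_e odd_k hdeg_def S.
have once := isolated_odd_components_count S sym_e v'.
rewrite /odd_count /iso_count -/(isolated e S) -/(odd_components e S).
lia.
Qed.
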